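(* Let $f: (\mathbb{R}^{+})^n \to (\mathbb{R}^{+})^n$ be homogeneous and monotone, and suppose its recession function $\hat f$ exists. Suppose the only eigenvectors of $\hat f$ in $(\mathbb{R}^{+})^n$ are the positive scalar multiples of $(1,\dots,1)$. Then for all $\lambda,\mu \in \mathbb{R}^{+}$ the slice space $S^\lambda_\mu(f) = \{x \in (\mathbb{R}^{+})^n : \mu x \le f(x) \le \lambda x\}$ is bounded in the Hilbert projective metric.
   Context: Homogeneous: $f(\lambda x) = \lambda f(x)$ for $\lambda>0$; monotone: $x\le y$ componentwise implies $f(x)\le f(y)$. The recession function exists if for each $x \in (\mathbb{R}^{+})^n$ the limit $\hat f(x) = \lim_{k\to\infty} f(x_1^k,\dots,x_n^k)^{1/k}$ (the $k$-th root taken componentwise) exists in $(\mathbb{R}^{+})^n$. An eigenvector of a map $g$ is $x$ with $g(x) = \lambda x$ for some $\lambda>0$. Hilbert projective metric: $d_H(y,z) = \max_i \log(y_i/z_i) - \min_i \log(y_i/z_i)$; $A$ is bounded if $\sup_{y,z\in A} d_H(y,z)<\infty$. *)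

From HB Require Import structures.
From mathcomp Require Import all_boot all_order all_algebra.
From mathcomp Require Import all_classical all_reals all_analysis.
Set Implicit Arguments. Unset Strict Implicit. Unset Printing Implicit Defensive.
Import Order.TTheory GRing.Theory Num.Theory.
Import numFieldNormedType.Exports.
Local Open Scope classical_set_scope.
Local Open Scope ring_scope.

Section Defs.
Context {R : realType} {n : nat}.
Notation vec := ('I_n -> R).

Definition posvec (x : vec) : Prop := forall i, 0 < x i.

Definition maps_pos (f : vec -> vec) : Prop :=
  forall x, posvec x -> posvec (f x).

Definition homogeneous_vec (f : vec -> vec) : Prop :=
  forall x (l : R), posvec x -> 0 < l -> f (fun i => l * x i) = (fun i => l * f x i).

Definition monotone_vec (f : vec -> vec) : Prop :=
  forall x y, posvec x -> posvec y -> (forall i, x i <= y i) -> forall i, f x i <= f y i.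

Definition is_recession (f hf : vec -> vec) : Prop :=
  forall x, posvec x ->
    posvec (hf x) /\
    forall j, (fun k : nat => (f (fun i => x i ^+ k) j) `^ (k%:R^-1)) @ \oo --> hf x j.

Definition is_eigvec (g : vec -> vec) (x : vec) : Prop :=
  posvec x /\ exists l : R, 0 < l /\ g x = (fun i => l * x i).

(* Hilbert projective metric: max_i log(y_i/z_i) - min_i log(y_i/z_i),
   written as max over pairs (i,j) of log(y_i/z_i) - log(y_j/z_j)
   (equal for n >= 1; the 0 seed is harmless as the diagonal terms are 0). *)
Definition dH (y z : vec) : R :=
  \big[Num.max/0]_(i < n) \big[Num.max/0]_(j < n)
     (ln (y i / z i) - ln (y j / z j)).

Definition slice (f : vec -> vec) (lam mu : R) : set vec :=
  [set x | posvec x /\ (forall i, mu * x i <= f x i) /\ (forall i, f x i <= lam * x i)].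

Definition hbounded (A : set vec) : Prop :=
  exists M : R, forall y z, A y -> A z -> dH y z <= M.

End Defs.

(* A monotone homogeneous map is nonexpansive in log coordinates for the sup norm,
   and on the slice space it moves log x by at most |ln lam| + |ln mu|.  If the
   slice space had unbounded oscillation, rescaling log x by 1/m, with m its
   oscillation, would give profiles in [0,1]^n with oscillation at least 1/2.
   At a cluster point w of these, (1/m) log f (exp (m w)) tends to log hf (exp w)
   but, by the two facts above, stays close to w along the chosen m; so
   hf (exp w) = exp w is an eigenvector of hf that is not constant. *)
From HB Require Import structures.
From mathcomp Require Import all_boot all_order all_algebra.
From mathcomp Require Import all_classical all_reals all_analysis.
From mathcomp Require Import lra.
Set Implicit Arguments. Unset Strict Implicit. Unset Printing Implicit Defensive.
Import Order.TTheory GRing.Theory Num.Theory.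
Import numFieldNormedType.Exports.
Local Open Scope classical_set_scope.
Local Open Scope ring_scope.

Lemma nested_compact_cluster {R : numFieldType} (T : pseudoMetricType R)
    (A : set T) (S : nat -> set T) :
  compact A -> (forall N, S N !=set0) ->
  (forall N M, (N <= M)%N -> S M `<=` S N) -> (forall N, S N `<=` A) ->
  exists2 w, A w & forall N (e : R), 0 < e -> exists2 w', S N w' & ball w e w'.
Proof.
move=> cA S_neq0 S_decr SA.
pose F := filter_from [set: nat] S.
have F_filter : Filter F.
  apply: filter_from_filter; first by exists 0%N.
  move=> a b _ _; exists (maxn a b) => // w Sw.
  by split; apply: S_decr Sw; rewrite ?leq_maxl ?leq_maxr.
have F_proper : ProperFilter F by apply: filter_from_proper => N _; exact: S_neq0.
have [w [Aw w_cluster]] := cA F F_proper (ex_intro2 _ _ 0%N I (SA 0%N)).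
exists w => // N e e0.
have [w' [Sw' bw']] :=
  w_cluster (S N) (ball w e) (ex_intro2 _ _ N I (fun _ h => h)) (nbhsx_ballx w e e0).
by exists w'.
Qed.

Lemma cvg_eq_of_frequently_near {R : realType} (u : R^nat) (l a : R) :
  u @ \oo --> l ->
  (forall e, 0 < e -> forall N, exists2 k, (N <= k)%N & `|u k - a| < e) -> l = a.
Proof.
move=> u_l u_near_a; apply/eqP; rewrite -subr_eq0 -normr_le0.
apply/ler_addgt0Pr => e e0; rewrite add0r.
have e20 : 0 < e / 2 by rewrite divr_gt0.
have [N _ u_near_l] := (cvgrPdist_lt _ _).1 u_l _ e20.
have [k Nk uk_a] := u_near_a _ e20 N.
have := ler_distD (u k) l a; have := u_near_l k Nk; lra.
Qed.

Lemma hbounded_of_ln_osc {R : realType} {n : nat} (A : set ('I_n -> R)) (B : R) :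
  (forall x, A x -> posvec x) ->
  (forall x, A x -> forall i j, ln (x i) - ln (x j) <= B) -> hbounded A.
Proof.
move=> A_pos A_osc; exists (Num.max B 0 + Num.max B 0) => y z Ay Az.
have B_le : B <= Num.max B 0 by rewrite le_max lexx.
have max_ge0 : 0 <= Num.max B 0 by rewrite le_max lexx orbT.
apply: bigmax_le => [|i _]; first exact: addr_ge0.
apply: bigmax_le => [|j _]; first exact: addr_ge0.
rewrite !ln_div ?posrE ?A_pos //.
have := A_osc y Ay i j; have := A_osc z Az j i; lra.
Qed.

Section TopicalMap.
Context {R : realType} {n : nat}.
Variable f : ('I_n -> R) -> ('I_n -> R).
Hypotheses (f_pos : maps_pos f) (f_hom : homogeneous_vec f) (f_mono : monotone_vec f).

Lemma topical_le_scale (x y : 'I_n -> R) (c : R) : posvec x -> posvec y -> 0 < c ->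
  (forall i, x i <= c * y i) -> forall j, f x j <= c * f y j.
Proof.
move=> px py c0 x_le j.
have pcy : posvec (fun i => c * y i) by move=> i; exact: mulr_gt0.
by have := f_mono px pcy x_le j; rewrite (f_hom py c0).
Qed.

Lemma ln_topical_exp_le (u v : 'I_n -> R) (d : R) : (forall i, u i <= v i + d) ->
  forall j, ln (f (fun i => expR (u i)) j) <= ln (f (fun i => expR (v i)) j) + d.
Proof.
move=> u_le j.
have pexp (w : 'I_n -> R) : posvec (fun i => expR (w i)) by move=> i; exact: expR_gt0.
have f_le : f (fun i => expR (u i)) j <= expR d * f (fun i => expR (v i)) j.
  by apply: topical_le_scale; rewrite ?expR_gt0 // => i; rewrite -expRD ler_expR addrC.
by rewrite -[d in _ + d]expRK addrC -lnM ?posrE ?expR_gt0 ?f_pos // ler_ln ?posrE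
  ?mulr_gt0 ?expR_gt0 ?f_pos.
Qed.

Lemma ln_topical_exp_lipschitz (u v : 'I_n -> R) (d : R) : (forall i, `|u i - v i| <= d) ->
  forall j, `|ln (f (fun i => expR (u i)) j) - ln (f (fun i => expR (v i)) j)| <= d.
Proof.
move=> uv j.
have [u_le v_le] : (forall i, u i <= v i + d) /\ (forall i, v i <= u i + d).
  by split=> i; have := uv i; rewrite ler_norml => /andP[]; lra.
have := ln_topical_exp_le u_le j; have := ln_topical_exp_le v_le j.
by rewrite ler_norml; lra.
Qed.

Lemma sliceZ (lam mu : R) (x : 'I_n -> R) (l : R) : 0 < l ->
  slice f lam mu x -> slice f lam mu (fun i => l * x i).
Proof.
move=> l0 [px [mu_le le_lam]]; split; first by move=> i; exact: mulr_gt0.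
by rewrite (f_hom px l0); split=> i; rewrite mulrCA ler_pM2l.
Qed.

Lemma slice_ln_dist (lam mu : R) (x : 'I_n -> R) : 0 < lam -> 0 < mu ->
  slice f lam mu x -> forall j, `|ln (f x j) - ln (x j)| <= `|ln lam| + `|ln mu|.
Proof.
move=> lam0 mu0 [px [mu_le le_lam]] j.
have fx0 : 0 < f x j by exact: f_pos.
have lo : ln mu + ln (x j) <= ln (f x j).
  by rewrite -lnM ?posrE // ler_ln ?posrE ?mulr_gt0.
have hi : ln (f x j) <= ln lam + ln (x j).
  by rewrite -lnM ?posrE // ler_ln ?posrE ?mulr_gt0.
have := ler_norm (ln lam); have := ler_norm (- ln mu); rewrite normrN.
have := normr_ge0 (ln lam); have := normr_ge0 (ln mu).
by rewrite ler_norml; lra.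
Qed.

End TopicalMap.

Section SliceDirections.
Context {R : realType} {n : nat}.
Variable f : ('I_n -> R) -> ('I_n -> R).
Hypotheses (f_pos : maps_pos f) (f_hom : homogeneous_vec f) (f_mono : monotone_vec f).
Variables (lam mu : R).
Hypotheses (lam0 : 0 < lam) (mu0 : 0 < mu).

Definition asymptotic_direction (w : 'I_n -> R) : Prop :=
  forall N (e : R), 0 < e -> exists m (w' : 'I_n -> R),
    [/\ (N <= m)%N, forall i, `|w i - w' i| < e &
        slice f lam mu (fun i => expR (m%:R * w' i))].

Lemma recession_fixes_asymptotic_direction (hf : ('I_n -> R) -> ('I_n -> R)) w :
  is_recession f hf -> asymptotic_direction w ->
  hf (fun i => expR (w i)) = (fun i => expR (w i)).
Proof.
move=> f_rec w_dir; apply: funext => j.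
set x := fun i => expR (w i).
have px : posvec x by move=> i; exact: expR_gt0.
have [hfx_pos hfx_lim] := f_rec x px.
pose g k := ln (f (fun i => x i ^+ k) j `^ k%:R^-1).
suff <- : ln (hf x j) = w j by rewrite lnK // posrE; exact: hfx_pos.
apply: (@cvg_eq_of_frequently_near _ g).
  exact: (continuous_cvg _ (continuous_ln (hfx_pos j)) (hfx_lim j)).
move=> e e0 N.
pose K := `|ln lam| + `|ln mu|.
have e30 : 0 < e / 3 by rewrite divr_gt0.
have [m [w' [Nm w_w' slice_w']]] := w_dir (maxn N (Num.truncn (K / (e / 3))).+1) _ e30.
exists m; first exact: leq_trans (leq_maxl _ _) Nm.
have m_gt : K / (e / 3) < m%:R.
  by apply: lt_le_trans (truncnS_gt _) _; rewrite ler_nat (leq_trans (leq_maxr _ _) Nm).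
have m0 : 0 < m%:R :> R by apply: le_lt_trans m_gt; rewrite divr_ge0 ?addr_ge0 // ltW.
set M : R := m%:R in m_gt m0 *.
have -> : g m = M^-1 * ln (f (fun i => expR (M * w i)) j).
  rewrite /g ln_powR; congr (_ * ln (f _ j)).
  by apply: funext => i; rewrite /x -expRM_natl.
set A := ln (f (fun i => expR (M * w i)) j).
set B := ln (f (fun i => expR (M * w' i)) j).
(* The distance from A to M * w j is at most M e/3 (nonexpansiveness) + K (the
   slice) + M e/3 (w' is close to w), and K < M e/3. *)
have Mw_Mw' i : `|M * w i - M * w' i| < M * (e / 3).
  by rewrite -mulrBr normrM gtr0_norm // ltr_pM2l.
have A_B : `|A - B| <= M * (e / 3).
  apply: ln_topical_exp_lipschitz => // i; exact/ltW/Mw_Mw'.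
have B_Mw' : `|B - M * w' j| <= K.
  by have := slice_ln_dist f_pos lam0 mu0 slice_w' j; rewrite expRK.
have K_lt : K < M * (e / 3) by rewrite -ltr_pdivrMr.
have Me : M * e = 3 * (M * (e / 3)) by rewrite mulrCA [3 * _]mulrC divfK.
rewrite -(ltr_pM2l m0) -[M in M * `|_|]gtr0_norm // -normrM mulrBr mulrA mulfV ?gt_eqF //.
rewrite mul1r Me; have := Mw_Mw' j; move: A_B B_Mw'; rewrite !ler_norml !ltr_norml.
lra.
Qed.

Definition normalized_profile (N : nat) (w : 'I_n -> R) : Prop :=
  [/\ forall i, 0 <= w i <= 1, exists i j, 2^-1 <= w j - w i &
      exists2 m, (N <= m)%N & slice f lam mu (fun i => expR (m%:R * w i))].

Lemma normalized_profile_of_slice N x i j : slice f lam mu x ->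
  N%:R + 1 < ln (x i) - ln (x j) -> exists w, normalized_profile N w.
Proof.
move=> sx osc; have [px _] := sx.
pose u k := ln (x k).
case: (@arg_minP _ _ _ i xpredT u isT) => i0 _ u_min.
case: (@arg_maxP _ _ _ i xpredT u isT) => j0 _ u_max.
pose t := u j0 - u i0.
have u_ge k : u i0 <= u k := u_min k isT.
have u_le k : u k <= u j0 := u_max k isT.
have t_gt : N%:R + 1 < t.
  by have : N%:R + 1 < u i - u j := osc; have := u_ge j; have := u_le i; rewrite /t; lra.
pose m := (Num.truncn t).+1.
have t_ge0 : 0 <= t by have := ler0n R N; lra.
have /andP[trunc_le trunc_gt] := truncn_itv t_ge0.
have m_gt : t < m%:R by [].
have m_le : m%:R <= t + 1 by rewrite /m -natr1 lerD2r.
have m0 : 0 < m%:R :> R by rewrite ltr0n.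
exists (fun k => (u k - u i0) / m%:R); split.
- move=> k; rewrite divr_ge0 ?subr_ge0 ?u_ge ?ler0n //= ler_pdivrMr // mul1r.
  by have := u_le k; rewrite /t in m_gt; lra.
- exists i0, j0; rewrite subrr mul0r subr0 ler_pdivlMr // -/t.
  by have := ler0n R N; lra.
- exists m; first by apply/ltnW; rewrite -(ltr_nat R); lra.
  have -> : (fun k => expR (m%:R * ((u k - u i0) / m%:R))) = (fun k => expR (- u i0) * x k).
    apply: funext => k; rewrite mulrC divfK ?gt_eqF // expRD mulrC lnK //.
    by rewrite posrE.
  by apply: sliceZ; rewrite ?expR_gt0.
Qed.

Lemma asymptotic_direction_of_unbounded_osc :
  (forall B, exists x, slice f lam mu x /\ exists i j, B < ln (x i) - ln (x j)) ->
  exists2 w, asymptotic_direction w & exists i j, w i < w j.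
Proof.
move=> unbounded.
pose S N := [set r : 'rV[R]_n | normalized_profile N (fun k => r ord0 k)].
have S_neq0 N : S N !=set0.
  have [x [sx [i [j osc]]]] := unbounded (N%:R + 1).
  have [w w_prof] := normalized_profile_of_slice sx osc.
  exists (\row_k w k); rewrite /S /=.
  by have -> : (fun k => (\row_k w k) ord0 k) = w by apply: funext => k; rewrite mxE.
have S_decr N M : (N <= M)%N -> S M `<=` S N.
  by move=> NM r [? ? [m Mm ?]]; split => //; exists m => //; exact: leq_trans Mm.
pose A := [set r : 'rV[R]_n | forall i, (fun _ => `[0, 1]%classic) i (r ord0 i)].
have A_compact : compact A by apply: rV_compact => i; exact: segment_compact.
have SA N : S N `<=` A by move=> r [cube _ _] i; rewrite /= in_itv cube.
have [r _ r_cluster] := nested_compact_cluster A_compact S_neq0 S_decr SA.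
have near_profile N e : 0 < e ->
    exists2 w', normalized_profile N w' & forall i, `|r ord0 i - w' i| < e.
  by move=> e0; have [r' Sr' [_ /(_ ord0) r_r']] := r_cluster N e e0; exists (fun k => r' ord0 k).
exists (fun k => r ord0 k).
  move=> N e e0; have [w' [_ _ [m Nm sl]] r_w'] := near_profile N e e0.
  by exists m, w'.
have eighth_gt0 : 0 < 8^-1 :> R by rewrite invr_gt0.
have [w' [_ [i [j gap]] _] r_w'] := near_profile 0%N _ eighth_gt0.
by exists i, j; have := r_w' i; have := r_w' j; rewrite !ltr_norml; lra.
Qed.

Lemma slice_ln_osc_bounded (hf : ('I_n -> R) -> ('I_n -> R)) :
  is_recession f hf ->
  (forall x, is_eigvec hf x -> exists c : R, 0 < c /\ x = (fun _ => c)) ->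
  exists B, forall x, slice f lam mu x -> forall i j, ln (x i) - ln (x j) <= B.
Proof.
move=> f_rec hf_eig; apply: contrapT => osc_unbounded.
have [w w_dir [i [j wij]]] : exists2 w, asymptotic_direction w & exists i j, w i < w j.
  apply: asymptotic_direction_of_unbounded_osc => B.
  apply: contrapT => no_x; apply: osc_unbounded; exists B => x sx i j.
  by rewrite leNgt; apply/negP => osc_gt; apply: no_x; exists x; split => //; exists i, j.
have [c [_ w_const]] : exists c : R, 0 < c /\ (fun i => expR (w i)) = (fun _ => c).
  apply: hf_eig; split; first by move=> k; exact: expR_gt0.
  exists 1; split => //; rewrite (recession_fixes_asymptotic_direction f_rec w_dir).
  by apply: funext => k; rewrite mul1r.
move: wij; rewrite -ltr_expR.
by have /= -> := congr1 (fun v => v i) w_const; have /= -> := congr1 (fun v => v j) w_const; rewrite ltxx.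
Qed.

End SliceDirections.

Theorem theorem7 (R : realType) (n : nat) (f : ('I_n -> R) -> ('I_n -> R)) :
  maps_pos f -> homogeneous_vec f -> monotone_vec f ->
  forall hf : ('I_n -> R) -> ('I_n -> R), is_recession f hf ->
  (forall x, is_eigvec hf x -> exists c : R, 0 < c /\ x = (fun _ => c)) ->
  forall lam mu : R, 0 < lam -> 0 < mu -> hbounded (slice f lam mu).
Proof.
move=> f_pos f_hom f_mono hf f_rec hf_eig lam mu lam0 mu0.
have [B osc_le] := slice_ln_osc_bounded f_pos f_hom f_mono lam0 mu0 f_rec hf_eig.
by apply: (hbounded_of_ln_osc _ osc_le) => x [].
Qed.
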